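(* Let $R$ be a ranking profile over $m$ candidates and let $\rhd=x_1,\dots,x_m$ be the ranking chosen by the Ranked Method of Equal Shares. Then for all $i\in\{1,\dots,\lfloor m/4\rfloor\}$, $\rho_i=\frac{m-i}{U(b_1,x_i,\{x_i,\dots,x_m\})}$ and $x_i\in\arg\max_{x\in\{x_i,\dots,x_m\}}U(b_1,x,\{x_i,\dots,x_m\})$.
   Context: Let $C$ be a set of $m$ candidates. A ranking is a strict linear order over $C$; $\mathcal{R}$ denotes the set of all rankings over $C$. A ranking profile is a function $R:\mathcal{R}\to[0,1]$ with $\sum_{\succ}R(\succ)=1$. For a ranking $\succ$ and $x\in X\subseteq C$, $u(\succ,x,X)=|\{y\in X\setminus\{x\}: x\succ y\}|$; for $b:\mathcal{R}\to\mathbb{R}_{\geq0}$, $U(b,x,X)=\sum_{\succ}b(\succ)u(\succ,x,X)$. Ranked Method of Equal Shares: set $X_1=C$, $b_1(\succ)=R(\succ)\binom{m}{2}$. In each round $i\in\{1,\dots,m-2\}$, for each $x\in X_i$ let $\rho_x$ be the smallest $\rho\geq0$ with $\sum_{\succ\in\mathcal{R}}\min\big(\rho\,b_1(\succ)u(\succ,x,X_i),\,b_i(\succ),\,u(\succ,x,X_i)\big)=m-i$ ($\rho_x=\infty$ if none exists); choose $x_i$ minimizing $\rho_x$ (ties broken arbitrarily), set $\rho_i=\rho_{x_i}$, place $x_i$ at position $i$, set $X_{i+1}=X_i\setminus\{x_i\}$ and $b_{i+1}(\succ)=b_i(\succ)-\min(\rho_i b_1(\succ)u(\succ,x_i,X_i),b_i(\succ),u(\succ,x_i,X_i))$.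 The last two candidates are ordered by majority with respect to the remaining budgets $b_{m-1}$. *)

From HB Require Import structures.
From mathcomp Require Import all_boot all_order all_algebra all_fingroup.
From mathcomp Require Import reals.
Set Implicit Arguments. Unset Strict Implicit. Unset Printing Implicit Defensive.
Import Order.TTheory GRing.Theory Num.Theory.
Local Open Scope ring_scope.

(* Candidates are 'I_m; a ranking is a permutation s : 'S_m, where s x is the
   position of candidate x (0 = top).  x is ranked above y iff s x < s y. *)
Definition ranks_above (m : nat) (s : 'S_m) (x y : 'I_m) : bool := (s x < s y)%N.

Definition u_score (m : nat) (s : 'S_m) (x : 'I_m) (X : {set 'I_m}) : nat :=
  #|[set y in X | (y != x) && ranks_above s x y]|.

Definition U_score (R : realType) (m : nat) (b : 'S_m -> R) (x : 'I_m)
  (X : {set 'I_m}) : R :=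
  \sum_(s : 'S_m) b s * (u_score s x X)%:R.

Definition pay_sum (R : realType) (m : nat) (b1 bi : 'S_m -> R) (x : 'I_m)
  (X : {set 'I_m}) (r : R) : R :=
  \sum_(s : 'S_m) Num.min (r * b1 s * (u_score s x X)%:R)
                          (Num.min (bi s) (u_score s x X)%:R).

(* rho values live in option R, None meaning +infinity. *)
Definition rho_spec (R : realType) (m : nat) (b1 bi : 'S_m -> R)
  (X : {set 'I_m}) (t : R) (x : 'I_m) (o : option R) : Prop :=
  match o with
  | Some r => 0 <= r /\ pay_sum b1 bi x X r = t /\
              (forall r', 0 <= r' -> pay_sum b1 bi x X r' = t -> r <= r')
  | None => forall r', 0 <= r' -> pay_sum b1 bi x X r' <> t
  end.

Definition ole (R : realType) (o1 o2 : option R) : bool :=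
  match o1, o2 with
  | Some a, Some b => a <= b
  | _, None => true
  | None, Some _ => false
  end.

(* Remaining candidates before round i (1-indexed): C minus x_1..x_{i-1}. *)
Definition remaining (m : nat) (x : nat -> 'I_m) (i : nat) : {set 'I_m} :=
  [set y | y \notin map x (iota 1 i.-1)].

Definition payment (R : realType) (m : nat) (b1 bi : 'S_m -> R) (o : option R)
  (x : 'I_m) (X : {set 'I_m}) (s : 'S_m) : R :=
  match o with
  | Some r => Num.min (r * b1 s * (u_score s x X)%:R)
                      (Num.min (bi s) (u_score s x X)%:R)
  | None => Num.min (bi s) (u_score s x X)%:R
  end.

(* A complete execution of the Ranked Method of Equal Shares on profile P:
   x i is the candidate placed at position i (1-indexed), rho i = rho_i,
   b i = b_i.  Ties are broken arbitrarily (any run is allowed). *)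
Definition RMES_run (R : realType) (m : nat) (P : 'S_m -> R)
  (x : nat -> 'I_m) (rho : nat -> option R) (b : nat -> 'S_m -> R) : Prop :=
  (forall s, b 1%N s = P s * ('C(m, 2))%:R) /\
  (forall i : nat, (1 <= i <= m - 2)%N ->
     let X := remaining x i in
     let t := (m - i)%:R : R in
     x i \in X /\
     rho_spec (b 1%N) (b i) X t (x i) (rho i) /\
     (forall y o, y \in X -> rho_spec (b 1%N) (b i) X t y o -> ole (rho i) o) /\
     (forall s, b i.+1 s = b i s - payment (b 1%N) (b i) (rho i) (x i) X s)) /\
  ((2 <= m)%N ->
     x m.-1 != x m /\
     remaining x m.-1 = [set x m.-1; x m] /\
     \sum_(s : 'S_m | ranks_above s (x m) (x m.-1)) b m.-1 s <=
     \sum_(s : 'S_m | ranks_above s (x m.-1) (x m)) b m.-1 s).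

(* In round i only m - i + 1 candidates remain, while the initial budgets sum to
   C(m,2) = m(m-1)/2.  Summing u over the remaining candidates gives the same
   total for every ranking, so the candidate x maximising U(b_1, x, X_i) has
   U >= C(m,2)(m-i)/2.  At rho = (m-i)/U(x) every voter of ranking s is asked
   for at most 4 b_1(s)/m, which is below the remaining budget as long as the
   first i-1 rounds have charged each voter at most 4(i-1)/m of its initial
   budget; hence none of the caps in the definition of rho_x is binding, the
   payment function is linear, and rho_x = (m-i)/U(x).  Since any candidate
   satisfies (m-i) <= rho_y U(y), the winner must be a maximiser of U.  Charging
   at most 4/m per round keeps the invariant alive for i <= m/4. *)
From HB Require Import structures.
From mathcomp Require Import all_boot all_order all_algebra all_fingroup.
From mathcomp Require Import reals.
From mathcomp.algebra_tactics Require Import ring lra.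
From mathcomp Require Import zify.
Set Implicit Arguments. Unset Strict Implicit. Unset Printing Implicit Defensive.
Import Order.TTheory GRing.Theory Num.Theory.

Lemma mul2n_bin2 m : (2 * 'C(m, 2) = m * (m - 1))%N.
Proof.
elim: m => [|m IH] //; rewrite binS bin1 mulnDr IH; case: m {IH} => // m; nia.
Qed.

Section PairwiseScore.

Variables (m : nat) (s : 'S_m) (X : {set 'I_m}).

Lemma u_scoreE x : u_score s x X = (\sum_(y in X) (s x < s y))%N.
Proof.
rewrite /u_score -sum1_card big_mkcond /= [RHS]big_mkcond /=.
apply: eq_bigr => y _; rewrite inE /ranks_above.
by case: (y \in X) => //=; case: eqP => [->|_] //=; rewrite ltnn.
Qed.

Lemma u_score_le x : x \in X -> (u_score s x X <= #|X| - 1)%N.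
Proof.
move=> xX; rewrite /u_score (cardsD1 x X) xX add1n subn1 /=.
apply: subset_leq_card; apply/subsetP => y; rewrite !inE.
by case/andP=> yX /andP[-> _]; rewrite yX.
Qed.

Lemma exists_u_score_top x :
  x \in X -> exists2 y, y \in X & u_score s y X = (#|X| - 1)%N.
Proof.
move=> xX; case: (arg_minnP (fun y => s y) xX) => y yX ys_min.
have {}yX : y \in X by []; exists y => //.
rewrite /u_score (cardsD1 y X) yX add1n subn1 /=.
apply: eq_card => z; rewrite !inE /ranks_above.
case zX: (z \in X); rewrite ?andbF ?andbT //=.
case: eqP => [->|nzy] //=; rewrite ltn_neqAle ys_min // andbT.
by apply/eqP => E; apply: nzy; rewrite (perm_inj (val_inj E)).
Qed.

(* Each pair of distinct candidates of X contributes exactly once. *)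
Lemma sum_u_score : (2 * \sum_(x in X) u_score s x X = #|X| * (#|X| - 1))%N.
Proof.
have swap : (\sum_(x in X) u_score s x X
             = \sum_(x in X) \sum_(y in X) (s y < s x))%N.
  by under eq_bigr do rewrite u_scoreE; rewrite exchange_big.
rewrite mul2n -addnn {2}swap.
under eq_bigr do rewrite u_scoreE.
rewrite -big_split /= -sum_nat_const; apply: eq_bigr => x xX.
rewrite -big_split /= (bigD1 x xX) /= ltnn add0n.
rewrite (cardsD1 x X) xX add1n subn1 /= -sum1_card.
apply: eq_big => [y|y /andP[_ nyx]]; first by rewrite !inE andbC.
have : s x != s y by apply/eqP=> E; rewrite (perm_inj E) eqxx in nyx.
by rewrite -val_eqE /=; case: ltngtP.
Qed.

End PairwiseScore.

Local Open Scope ring_scope.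

Section WeightedScore.

Variables (R : realType) (m : nat) (b1 : 'S_m -> R) (X : {set 'I_m}).
Hypothesis b1_ge0 : forall s, 0 <= b1 s.

Lemma U_score_ge0 y : 0 <= U_score b1 y X.
Proof. by apply: sumr_ge0 => s _; rewrite mulr_ge0. Qed.

Lemma sum_U_score :
  (\sum_(y in X) U_score b1 y X) * 2 = (\sum_s b1 s) * (#|X| * (#|X| - 1))%:R.
Proof.
rewrite /U_score exchange_big /= !mulr_suml.
apply: eq_bigr => s _; rewrite -mulr_sumr -mulrA -natr_sum.
by congr (_ * _); rewrite -natrM mulnC sum_u_score.
Qed.

Lemma U_score_top_ge s x :
  x \in X -> exists2 y, y \in X & b1 s * (#|X| - 1)%:R <= U_score b1 y X.
Proof.
move=> xX; have [y yX uy] := exists_u_score_top s xX; exists y => //.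
rewrite /U_score (bigD1 s) //= uy lerDl.
by apply: sumr_ge0 => s' _; rewrite mulr_ge0.
Qed.

Lemma max_U_score_ge ys :
  ys \in X -> (forall y, y \in X -> U_score b1 y X <= U_score b1 ys X) ->
  (\sum_s b1 s) * (#|X| - 1)%:R <= 2 * U_score b1 ys X.
Proof.
move=> ysX ys_max.
have sum_le : \sum_(y in X) U_score b1 y X <= #|X|%:R * U_score b1 ys X.
  by rewrite mulr_natl -sumr_const; apply: ler_sum.
have kpos : 0 < #|X|%:R :> R by rewrite ltr0n; apply/card_gt0P; exists ys.
rewrite -(ler_pM2l kpos); have := sum_U_score; rewrite natrM; lra.
Qed.

End WeightedScore.

Section PaySum.

Variables (R : realType) (m : nat) (b1 bi : 'S_m -> R) (X : {set 'I_m}).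

Lemma pay_sum_le x r : pay_sum b1 bi x X r <= r * U_score b1 x X.
Proof.
rewrite /pay_sum /U_score mulr_sumr; apply: ler_sum => s _.
by rewrite ge_min mulrA lexx.
Qed.

Lemma pay_sum_linear x r :
  (forall s, r * b1 s * (u_score s x X)%:R <= bi s) ->
  (forall s, r * b1 s * (u_score s x X)%:R <= (u_score s x X)%:R) ->
  pay_sum b1 bi x X r = r * U_score b1 x X.
Proof.
move=> le_bi le_u; rewrite /pay_sum /U_score mulr_sumr; apply: eq_bigr => s _.
by rewrite min_l ?mulrA // le_min le_bi le_u.
Qed.

Lemma rho_spec_Some_ge t x r :
  rho_spec b1 bi X t x (Some r) -> t <= r * U_score b1 x X.
Proof. by case=> _ [<- _]; apply: pay_sum_le. Qed.

Lemma rho_spec_linear t x :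
  0 <= t -> 0 < U_score b1 x X ->
  pay_sum b1 bi x X (t / U_score b1 x X) = t ->
  rho_spec b1 bi X t x (Some (t / U_score b1 x X)).
Proof.
move=> t_ge0 Upos pay_t; split; first by rewrite divr_ge0 // ltW.
split=> // r' _ pay_r'; rewrite ler_pdivrMr //.
by rewrite -pay_r' pay_sum_le.
Qed.

End PaySum.

Section Round.

Variables (R : realType) (m : nat) (b1 bi : 'S_m -> R) (X : {set 'I_m}) (n : nat).
Hypotheses (b1_ge0 : forall s, 0 <= b1 s)
           (sum_b1 : \sum_s b1 s = ('C(m, 2))%:R)
           (n_gt0 : (0 < n)%N) (n_lt_m : (n < m)%N) (n_lt_X : (n < #|X|)%N)
           (budget : forall s, 4 * b1 s <= m%:R * bi s).

Let K : R := (#|X| - 1)%:R.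

Lemma u_score_le_K s y : y \in X -> (u_score s y X)%:R <= K.
Proof. by move=> yX; rewrite /K ler_nat u_score_le. Qed.

Section Maximiser.

Variable ys : 'I_m.
Hypotheses (ysX : ys \in X)
           (ys_max : forall y, y \in X -> U_score b1 y X <= U_score b1 ys X).

Let Um := U_score b1 ys X.
Let c : R := ('C(m, 2))%:R.

Let n_le_K : n%:R <= K. Proof. by rewrite /K ler_nat; lia. Qed.

Let cK_le_Um : c * K <= 2 * Um.
Proof. by rewrite /c -sum_b1; apply: max_U_score_ge. Qed.

Lemma max_U_score_gt0 : 0 < U_score b1 ys X.
Proof.
have Kpos : 0 < K by have := n_le_K; have := n_gt0; rewrite -(ltr0n R); lra.
have cpos : 0 < c by rewrite ltr0n bin_gt0 (leq_ltn_trans n_gt0 n_lt_m).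
by have := cK_le_Um; rewrite -/Um => ?; nra.
Qed.

(* At the rate n / Um a voter of ranking s pays at most 4 b1(s) / m, because
   Um >= C(m,2) K / 2 = m (m - 1) K / 4 and n <= m - 1. *)
Lemma max_U_score_share_le s :
  m%:R * (n%:R / U_score b1 ys X * b1 s * K) <= 4 * b1 s.
Proof.
have Upos := max_U_score_gt0; rewrite -/Um in Upos *.
have n_le_m1 : n%:R <= m%:R - 1 :> R.
  have : n.+1%:R <= m%:R :> R by rewrite ler_nat.
  by rewrite -natr1 => ?; lra.
have n1 : 1 <= n%:R :> R by rewrite ler1n.
have m1_gt0 : 0 < m%:R - 1 :> R by lra.
have -> : m%:R * (n%:R / Um * b1 s * K) = m%:R * (n%:R * b1 s * K) / Um.
  by field; lra.
rewrite ler_pdivrMr // -(ler_pM2r m1_gt0).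
have nb_ge0 : 0 <= n%:R * b1 s by rewrite mulr_ge0.
have mK : m%:R * (m%:R - 1) * K <= 4 * Um.
  have two_c : 2 * c = m%:R * (m%:R - 1).
    by rewrite /c -natrM mul2n_bin2 natrM natrB ?(leq_trans _ n_lt_m).
  by have := cK_le_Um; rewrite -two_c -/Um; lra.
have := ler_wpM2l nb_ge0 mK; have := ler_wpM2l (mulr_ge0 (ler0n _ 4) (b1_ge0 s)) n_le_m1.
by move=> ? ?; nra.
Qed.

(* The top candidate of ranking s has u = K >= n, so Um >= n b1(s). *)
Lemma max_U_score_rate_le1 s : n%:R / U_score b1 ys X * b1 s <= 1.
Proof.
have Upos := max_U_score_gt0; rewrite -/Um in Upos *.
have [y yX top] := U_score_top_ge b1_ge0 s ysX.
have := le_trans top (ys_max yX); rewrite -/Um -/K => Um_top.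
rewrite mulrAC ler_pdivrMr // mul1r.
by have := b1_ge0 s; have := n_le_K => ? ?; nra.
Qed.

Lemma rho_spec_max_U_score :
  rho_spec b1 bi X n%:R ys (Some (n%:R / U_score b1 ys X)).
Proof.
apply: rho_spec_linear => //; first exact: max_U_score_gt0.
set r0 := n%:R / U_score b1 ys X; rewrite pay_sum_linear.
- by rewrite /r0 mulfVK ?gt_eqF ?max_U_score_gt0.
- move=> s; have r0b1 : 0 <= r0 * b1 s.
    by rewrite mulr_ge0 // divr_ge0 // ltW // max_U_score_gt0.
  have := ler_wpM2l r0b1 (u_score_le_K s ysX); have := budget s.
  have := max_U_score_share_le s; rewrite -/r0.
  have : 0 < m%:R :> R by rewrite ltr0n (leq_ltn_trans _ n_lt_m).
  by move=> ? ? ? ?; nra.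
- by move=> s; rewrite -[leRHS]mul1r ler_wpM2r // max_U_score_rate_le1.
Qed.

End Maximiser.

Lemma round_winner xw ro :
  xw \in X -> rho_spec b1 bi X n%:R xw ro ->
  (forall y o, y \in X -> rho_spec b1 bi X n%:R y o -> ole ro o) ->
  [/\ ro = Some (n%:R / U_score b1 xw X),
      forall y, y \in X -> U_score b1 y X <= U_score b1 xw X &
      forall s, m%:R * payment b1 bi ro xw X s <= 4 * b1 s].
Proof.
move=> xwX xw_spec xw_min.
case: (arg_maxP (fun y => U_score b1 y X) xwX) => ys ysX ys_max.
have {}ysX : ys \in X by [].
have {}ys_max : forall y, y \in X -> U_score b1 y X <= U_score b1 ys X by [].
have Upos := max_U_score_gt0 ysX ys_max.
set Um := U_score b1 ys X in Upos ys_max *; set r0 := n%:R / Um.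
have {xw_min} := xw_min ys (Some r0) ysX (rho_spec_max_U_score ysX ys_max).
case: ro xw_spec => [r|] //= r_spec r_le_r0.
have n_le := rho_spec_Some_ge r_spec; have Uxw_le := ys_max xw xwX.
have r_ge0 : 0 <= r by case: r_spec.
(* n <= r U(xw) <= r0 U(xw) <= r0 Um = n forces equality throughout. *)
have r0Um : r0 * Um = n%:R by rewrite /r0 mulfVK ?gt_eqF.
have Uxw_ge0 : 0 <= U_score b1 xw X by apply: U_score_ge0.
have Uxw_eq : U_score b1 xw X = Um.
  apply/eqP; rewrite eq_le Uxw_le /=.
  have r0pos : 0 < r0 by rewrite divr_gt0 // ltr0n.
  rewrite -(ler_pM2l r0pos) r0Um; nra.
rewrite Uxw_eq in n_le *.
have r_eq : r = r0.
  by apply/eqP; rewrite eq_le r_le_r0 /= /r0 ler_pdivrMr.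
split=> [| y yX | s]; first by rewrite r_eq.
  exact: ys_max.
apply: le_trans (max_U_score_share_le ysX ys_max s); rewrite /payment r_eq ler_wpM2l // ge_min.
rewrite ler_wpM2l ?u_score_le_K //.
by rewrite mulr_ge0 ?b1_ge0 ?divr_ge0 ?ler0n ?ltW.
Qed.

End Round.

Section RunOrder.

Variables (m : nat) (x : nat -> 'I_m).
Hypotheses (m_ge2 : (2 <= m)%N)
           (x_fresh : forall k, (1 <= k <= m - 2)%N -> x k \in remaining x k)
           (x_last : x m.-1 != x m /\ remaining x m.-1 = [set x m.-1; x m]).

Lemma card_remaining_ge j : (m - j.-1 <= #|remaining x j|)%N.
Proof.
have -> : remaining x j = ~: [set y in map x (iota 1 j.-1)].
  by apply/setP => y; rewrite !inE.
have := cardsC [set y in map x (iota 1 j.-1)]; rewrite card_ord cardsE.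
have := card_size (map x (iota 1 j.-1)); rewrite size_map size_iota.
move=> le_j E; rewrite leq_subLR (leq_trans (eq_leq (esym E))) //.
by rewrite leq_add2r.
Qed.

Lemma run_injective j k : (1 <= j)%N -> (j < k)%N -> (k <= m)%N -> x j != x k.
Proof.
move=> j1 jk km; have [x_ne x_rem] := x_last.
have early l : (l < k)%N -> (1 <= l)%N -> x l \in map x (iota 1 k.-1).
  by move=> lk l1; apply: map_f; rewrite mem_iota; lia.
case: (leqP k (m - 2)) => hk.
  have := @x_fresh k; rewrite hk andbT (leq_trans j1 (ltnW jk)) inE => /(_ isT).
  by apply: contra => /eqP <-; apply: early.
have : x k \in remaining x m.-1.
  rewrite x_rem !inE; have [->|->] : k = m.-1 \/ k = m by lia.
  - by rewrite eqxx.
  - by rewrite eqxx orbT.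
rewrite inE; case: (leqP j (m - 2)) => hj.
  by apply: contra => /eqP <-; apply: map_f; rewrite mem_iota; lia.
by have [-> ->] : j = m.-1 /\ k = m by lia.
Qed.

Lemma run_surjective y : exists2 k, (1 <= k <= m)%N & x k = y.
Proof.
have [_ x_rem] := x_last.
case: (boolP (y \in map x (iota 1 m.-2))).
  by case/mapP => k; rewrite mem_iota => hk ->; exists k => //; lia.
move=> y_rem; have : y \in remaining x m.-1 by rewrite inE.
by rewrite x_rem !inE => /orP[/eqP ->|/eqP ->]; [exists m.-1 | exists m] => //; lia.
Qed.

Lemma remaining_run i :
  (1 <= i <= m)%N -> remaining x i = [set y in map x (iota i (m - i).+1)].
Proof.
move=> /andP[i1 im]; apply/setP => y; rewrite !in_set; apply/idP/idP.
  have [k k_range <-] := run_surjective y; case: (ltnP k i) => ik.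
    by move/negP; case; apply: map_f; rewrite mem_iota; lia.
  by move=> _; apply: map_f; rewrite mem_iota; lia.
case/mapP => k; rewrite mem_iota => k_range ->.
apply/negP => /mapP [j]; rewrite mem_iota => j_range E.
suff : x j != x k by rewrite E eqxx.
by apply: run_injective; lia.
Qed.

End RunOrder.

Section Run.

Variables (R : realType) (m : nat) (P : 'S_m -> R) (x : nat -> 'I_m)
          (rho : nat -> option R) (b : nat -> 'S_m -> R).
Hypotheses (P_ge0 : forall s, 0 <= P s) (P_sum : \sum_s P s = 1)
           (run : RMES_run P x rho b).

Lemma run_b1_ge0 s : 0 <= b 1%N s.
Proof. by have [-> _] := run; rewrite mulr_ge0. Qed.

Lemma run_sum_b1 : \sum_s b 1%N s = ('C(m, 2))%:R.
Proof.
have [b1E _] := run.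
by under eq_bigr do rewrite b1E; rewrite -mulr_suml P_sum mul1r.
Qed.

Lemma run_fresh k : (1 <= k <= m - 2)%N -> x k \in remaining x k.
Proof. by case: run => _ [round _] /round []. Qed.

Lemma run_last : (2 <= m)%N ->
  x m.-1 != x m /\ remaining x m.-1 = [set x m.-1; x m].
Proof. by case: run => _ [_ last] /last [? []]. Qed.

Lemma run_round j : (1 <= j)%N -> (4 * j <= m)%N ->
  (forall s, m%:R * (b 1%N s - b j s) <= (4 * (j - 1))%:R * b 1%N s) ->
  let X := remaining x j in
  [/\ rho j = Some ((m - j)%:R / U_score (b 1%N) (x j) X),
      forall y, y \in X -> U_score (b 1%N) y X <= U_score (b 1%N) (x j) X &
      forall s, m%:R * (b 1%N s - b j.+1 s) <= (4 * j)%:R * b 1%N s].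
Proof.
move=> j1 jm spent X.
have [_ [round _]] := run; have [xjX [xj_spec [xj_min b_next]]] := round j (ltac:(lia)).
have four_j : 4 * j%:R <= m%:R :> R by rewrite -natrM ler_nat.
have spentE : (4 * (j - 1))%:R = 4 * (j%:R - 1) :> R by rewrite natrM natrB.
have budget s : 4 * b 1%N s <= m%:R * b j s.
  by have := spent s; have := run_b1_ge0 s; rewrite spentE => ? ?; nra.
have n_gt0 : (0 < m - j)%N by lia.
have n_lt_m : (m - j < m)%N by lia.
have n_lt_X : (m - j < #|X|)%N by have := card_remaining_ge x j; rewrite /X; lia.
have [rho_j xj_max paid] := round_winner run_b1_ge0 run_sum_b1 n_gt0 n_lt_m n_lt_X
                              budget xjX xj_spec xj_min.
split=> // s; have := paid s; have := spent s.
by rewrite b_next spentE natrM => ? ?; nra.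
Qed.

Lemma run_spent j : (1 <= j)%N -> (4 * (j - 1) <= m)%N ->
  forall s, m%:R * (b 1%N s - b j s) <= (4 * (j - 1))%:R * b 1%N s.
Proof.
elim: j => [//|j IH] _ jm s; case: (posnP j) => [->|j_gt0].
  by rewrite subrr mulr0 mul0r.
have [_ _ ] := run_round j_gt0 (ltac:(lia)) (IH j_gt0 (ltac:(lia))).
by rewrite subn1.
Qed.

End Run.

Theorem mainTheorem7 (R : realType) (m : nat) (P : 'S_m -> R)
  (x : nat -> 'I_m) (rho : nat -> option R) (b : nat -> 'S_m -> R) :
  (forall s, 0 <= P s) -> \sum_(s : 'S_m) P s = 1 ->
  RMES_run P x rho b ->
  forall i : nat, (1 <= i <= m %/ 4)%N ->
    let Xi := [set y in map x (iota i (m - i).+1)] in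
    rho i = Some ((m - i)%:R / U_score (b 1%N) (x i) Xi) /\
    (forall y, y \in Xi -> U_score (b 1%N) y Xi <= U_score (b 1%N) (x i) Xi).
Proof.
move=> P_ge0 P_sum run i /andP[i1 i_le] Xi.
have m_ge2 : (2 <= m)%N by lia.
have XiE : Xi = remaining x i.
  by rewrite (remaining_run m_ge2 (run_fresh run) (run_last run m_ge2)) //; lia.
have spent := run_spent P_ge0 P_sum run i1 (ltac:(lia)).
have [rho_i xi_max _] := run_round P_ge0 P_sum run i1 (ltac:(lia)) spent.
by rewrite XiE.
Qed.
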